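(* Let $\mathbb{G}$ be an $E$-group, $\alpha\subseteq E$ and $n\ge1$. Suppose $\mathbb{G}[\alpha]$ is compatible with every free amalgamation chain of length $m$, $1\le m\le n$, whose constituents are $\mathrm{Cay}(\mathbb{G}[\alpha_i])$ with $\alpha_i\subsetneq\alpha$; that is, for every such chain $\mathbb{A}$ and every $w\in\alpha^*$ with $[w]_{\mathbb{G}}=1$, $\pi_w$ is the identity on the vertex set of $\mathbb{A}$. Then $\mathbb{G}[\alpha]$ is $N$-acyclic for $N=n+2$.
   Context: Let $E$ be a finite set. An $E$-group is a group $\mathbb{G}$ together with an inclusion $E\subseteq\mathbb{G}$ such that $E$ generates $\mathbb{G}$ and every $e\in E$ satisfies $e\neq1$, $e^2=1$. For $w=e_1\cdots e_n\in E^*$, $[w]_{\mathbb{G}}=e_1\cdots e_n$; for $\alpha\subseteq E$, $\mathbb{G}[\alpha]$ is the subgroup generated by $\alpha$. An $E$-graph is $\mathbb{H}=(V,(R_e)_{e\in E})$ with each $R_e$ symmetric and each vertex having at most one $R_e$-neighbour; $\pi_e$ is the permutation of $V$ swapping each vertex with its $R_e$-neighbour if any and fixing it otherwise, and $\pi_{e_1\cdots e_n}=\pi_{e_n}\circ\cdots\circ\pi_{e_1}$. Free amalgamation chain: given $m\ge1$, sets $\alpha_1,\dots,\alpha_m\subsetneq\alpha$, and elements $g_i\in\mathbb{G}[\alpha_i]$ for $1\le i<m$ such that for every $1<i<m$ the sets $\mathbb{G}[\alpha_{i-1}\cap\alpha_i]$ and $g_i\mathbb{G}[\alpha_i\cap\alpha_{i+1}]$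 are disjoint, the chain $\mathbb{A}=\bigoplus_{i=1}^m(\mathrm{Cay}(\mathbb{G}[\alpha_i]),g_i)$ is the $E$-graph whose vertex set is the quotient of $\bigcup_{i=1}^m\mathbb{G}[\alpha_i]\times\{i\}$ by the equivalence relation generated by $(g_ih,i)\approx(h,i+1)$ for $1\le i<m$ and $h\in\mathbb{G}[\alpha_i\cap\alpha_{i+1}]$, and whose $R_e$ is the image of $\bigcup_{i: e\in\alpha_i}\{((g,i),(ge,i)):g\in\mathbb{G}[\alpha_i]\}$; its length is $m$. A coset cycle of length $k\ge2$ in the $\alpha$-group $\mathbb{G}[\alpha]$ is a cyclically indexed family $(g_i,\beta_i)_{i\in\mathbb{Z}_k}$ with $g_i\in\mathbb{G}[\alpha]$, $\beta_i\subseteq\alpha$, such that $g_{i+1}\in g_i\mathbb{G}[\beta_i]$ and $g_i\mathbb{G}[\beta_i\cap\beta_{i-1}]\cap g_{i+1}\mathbb{G}[\beta_i\cap\beta_{i+1}]=\emptyset$ for all $i$; $N$-acyclic means no coset cycles of length $k$ with $2\le k\le N$. *)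

From HB Require Import structures.
From mathcomp Require Import all_boot monoid.
From Stdlib Require Import Relations.Relation_Definitions Relations.Relation_Operators.

Set Implicit Arguments.
Unset Strict Implicit.
Unset Printing Implicit Defensive.

Local Open Scope group_scope.

Section EGroups.
Variables (E : finType) (G : groupType) (iota : E -> G).

Definition wval (w : seq E) : G := foldr (fun e x => iota e * x) 1 w.

Definition is_E_group : Prop :=
  [/\ injective iota,
      (forall e, iota e != 1),
      (forall e, iota e * iota e = 1) &
      (forall g : G, exists w : seq E, g = wval w)].

Definition subgen (a : {set E}) (g : G) : Prop :=
  exists w : seq E, all (fun e => e \in a) w /\ g = wval w.

Definition in_coset (g : G) (b : {set E}) (x : G) : Prop :=
  exists h, subgen b h /\ x = g * h.

Variables (m : nat) (al : nat -> {set E}) (gs : nat -> G).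

Definition is_fac (alpha : {set E}) : Prop :=
  [/\ 1 <= m,
      (forall i, 1 <= i <= m -> al i \proper alpha),
      (forall i, 1 <= i < m -> subgen (al i) (gs i)) &
      (forall i, 1 < i < m ->
         ~ exists x, subgen (al i.-1 :&: al i) x /\
                     in_coset (gs i) (al i :&: al i.+1) x)].

Definition chain_gen : relation (G * nat)%type := fun u v =>
  exists i h, [/\ 1 <= i < m, subgen (al i :&: al i.+1) h,
                  u = (gs i * h, i) & v = (h, i.+1)].

Definition chain_eq : relation (G * nat)%type := clos_refl_sym_trans _ chain_gen.

Definition is_vertex (v : G * nat) : Prop :=
  1 <= v.2 <= m /\ subgen (al v.2) v.1.

(* R_e on the quotient (stated on representatives, closed under chain_eq) *)
Definition chain_R (e : E) : relation (G * nat)%type := fun u v =>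
  exists i g, [/\ 1 <= i <= m, e \in al i, subgen (al i) g,
                  chain_eq u (g, i) & chain_eq v (g * iota e, i)].

(* graph of pi_e: swap with the R_e-neighbour, or fix if there is none *)
Definition chain_pi (e : E) : relation (G * nat)%type := fun u v =>
  chain_R e u v \/ (chain_eq u v /\ ~ exists v', chain_R e u v').

(* graph of pi_w, pi_{e1...en} = pi_en o ... o pi_e1 *)
Fixpoint chain_piw (w : seq E) : relation (G * nat)%type :=
  match w with
  | [::] => chain_eq
  | e :: w' => fun u v => exists u', chain_pi e u u' /\ chain_piw w' u' v
  end.

Definition piw_identity (w : seq E) : Prop :=
  forall u v, is_vertex u -> chain_piw w u v -> chain_eq u v.

End EGroups.

Section CosetCycles.
Variables (E : finType) (G : groupType) (iota : E -> G).

Definition coset_cycle (alpha : {set E}) (k : nat)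
    (g : 'I_k -> G) (b : 'I_k -> {set E}) : Prop :=
  [/\ 2 <= k,
      (forall i, subgen iota alpha (g i)),
      (forall i, b i \subset alpha),
      (forall i, in_coset iota (g i) (b i) (g (ordS i))) &
      (forall i, ~ exists x,
          in_coset iota (g i) (b i :&: b (ord_pred i)) x /\
          in_coset iota (g (ordS i)) (b i :&: b (ordS i)) x)].

Definition N_acyclic (alpha : {set E}) (N : nat) : Prop :=
  forall k, 2 <= k <= N ->
    forall (g : 'I_k -> G) (b : 'I_k -> {set E}), ~ coset_cycle alpha g b.

End CosetCycles.

(* A coset cycle (g_i, b_i) of length k <= n + 2 in G[alpha] (indices modulo k)
   is unrolled into the free amalgamation chain of Cay(G[b_1]), ...,
   Cay(G[b_l]), l = max (k - 2) 1, glued along the steps g_i^-1 g_(i+1); the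
   disjointness conditions of the cycle are precisely the freeness conditions
   of the chain.  Concatenating words for all the steps gives a word w with
   [w] = 1 whose walk starts in the coset G[b_0 :&: b_1] of the first
   constituent, crosses the chain, and ends in the coset
   g_l^-1 g_(l+1) G[b_l :&: b_(l+1)] of the last one.  Both cosets are
   isolated, i.e. untouched by the gluing, so the letters outside the
   constituent fix their vertices.  Compatibility makes pi_w the identity, so
   the end vertex lies in the isolated class of the start: hence l = 1 and
   G[b_0 :&: b_1] meets g_1^-1 g_2 G[b_1 :&: b_2], contradicting the cycle
   condition at index 1. *)

From mathcomp Require Import all_boot monoid.
From Stdlib Require Import Relations.Relation_Operators.

Set Implicit Arguments.
Unset Strict Implicit.
Unset Printing Implicit Defensive.

Local Open Scope group_scope.

Section Words.
Variables (E : finType) (G : groupType) (iota : E -> G).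

Lemma wval_cat u v : wval iota (u ++ v) = wval iota u * wval iota v.
Proof. by elim: u => [|e u IHu] /=; rewrite ?mul1g // IHu mulgA. Qed.

Lemma subgen1 (D : {set E}) : subgen iota D 1.
Proof. by exists [::]. Qed.

Lemma subgen_gen (D : {set E}) e : e \in D -> subgen iota D (iota e).
Proof. by move=> De; exists [:: e]; rewrite /= De mulg1. Qed.

Lemma subgenM (D : {set E}) x y :
  subgen iota D x -> subgen iota D y -> subgen iota D (x * y).
Proof.
by move=> [u [Du ->]] [v [Dv ->]]; exists (u ++ v); rewrite wval_cat all_cat Du Dv.
Qed.

Lemma subgenS (D D' : {set E}) x :
  D \subset D' -> subgen iota D x -> subgen iota D' x.
Proof.
move=> sDD' [u [Du ->]]; exists u; split=> //.
by apply: sub_all Du => e /(subsetP sDD').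
Qed.

Lemma subgen_filter (A B : {set E}) u : all (fun e => e \in B) u ->
  subgen iota (A :&: B) (wval iota [seq e <- u | e \in A]).
Proof.
move=> Bu; exists [seq e <- u | e \in A]; split=> //.
by rewrite all_filter; apply: sub_all Bu => e Be; apply/implyP => Ae; rewrite inE Ae.
Qed.

Lemma in_coset1 (D : {set E}) x : in_coset iota 1 D x <-> subgen iota D x.
Proof. by split=> [[h [Dh ->]]|Dx]; [rewrite mul1g | exists x; rewrite mul1g]. Qed.

Hypothesis iota_invol : forall e, iota e * iota e = 1.

Lemma wval_rev u : wval iota (rev u) = (wval iota u)^-1.
Proof.
elim: u => [|e u IHu] /=; first by rewrite invg1.
by rewrite rev_cons -cats1 wval_cat IHu /= mulg1 invgM (mulg1_eq (iota_invol e)).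
Qed.

Lemma subgenV (D : {set E}) x : subgen iota D x -> subgen iota D x^-1.
Proof. by move=> [u [Du ->]]; exists (rev u); rewrite wval_rev all_rev. Qed.

End Words.

Section Chains.
Variables (E : finType) (G : groupType) (iota : E -> G).
Variables (m : nat) (al : nat -> {set E}) (gs : nat -> G).

Local Notation ceq := (chain_eq iota m al gs).
Local Notation cgen := (chain_gen iota m al gs).
Local Notation cpi := (chain_pi iota m al gs).
Local Notation cpiw := (chain_piw iota m al gs).

Lemma chain_piw_eql w u u' v : ceq u u' -> cpiw w u' v -> cpiw w u v.
Proof.
case: w => [|e w] /= uu'; first exact: rst_trans.
have R_eql v' : chain_R iota m al gs e u' v' -> chain_R iota m al gs e u v'.
  by case=> i [g [? ? ? u'g ?]]; exists i, g; split=> //; apply: rst_trans u'g.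
case=> u'' [[Ru'|[u'u'' noR]] w_walk]; exists u''; split=> //; first by left; apply: R_eql.
right; split; first exact: rst_trans u'u''.
case=> v' [i [g [? ? ? ug ?]]]; apply: noR; exists v', i, g; split=> //.
exact: rst_trans (rst_sym _ _ _ _ uu') ug.
Qed.

Lemma chain_piw_cat w1 w2 u v z : cpiw w1 u v -> cpiw w2 v z -> cpiw (w1 ++ w2) u z.
Proof.
elim: w1 u => [|e w1 IHw] u /=; first exact: chain_piw_eql.
by case=> u' [pi_uu' walk] ?; exists u'; split=> //; apply: IHw walk _.
Qed.

Lemma chain_pi_inside i x e : 1 <= i <= m -> e \in al i -> subgen iota (al i) x ->
  cpi e (x, i) (x * iota e, i).
Proof. by move=> ? ? ?; left; exists i, x; split=> //; apply: rst_refl. Qed.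

Lemma chain_piw_inside i x u : 1 <= i <= m -> subgen iota (al i) x ->
  all (fun e => e \in al i) u -> cpiw u (x, i) (x * wval iota u, i).
Proof.
move=> i_m; elim: u x => [|e u IHu] x x_al /=; first by rewrite mulg1 => _; apply: rst_refl.
case/andP=> e_al u_al; exists (x * iota e, i); split; first exact: chain_pi_inside.
by rewrite mulgA; apply: IHu u_al; apply: subgenM x_al (subgen_gen _ e_al).
Qed.

Definition in_region i c (D : {set E}) (u : G * nat) : Prop :=
  u.2 = i /\ in_coset iota c D u.1.

Definition isolated_region i c D : Prop :=
  forall u v, in_region i c D u -> ~ cgen u v /\ ~ cgen v u.

Lemma chain_eq_isolated i c D u v : isolated_region i c D -> ceq u v ->
  in_region i c D u <-> in_region i c D v.
Proof.
move=> iso uv; induction uv as [u v uv | u | u v _ IH | u v z _ IHuv _ IHvz].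
- by split=> [/(iso _ v)[] | /(iso _ u)[]].
- by [].
- exact: iff_sym.
- exact: iff_trans IHuv IHvz.
Qed.

Lemma chain_pi_isolated i c D e u : isolated_region i c D -> in_region i c D u ->
  e \notin al i -> cpi e u u.
Proof.
move=> iso u_reg e_al; right; split; first exact: rst_refl.
case=> v [j [g [_ e_alj _ ug _]]]; have [/= j_i _] := (chain_eq_isolated iso ug).1 u_reg.
by rewrite -j_i e_alj in e_al.
Qed.

(* Letters outside [al i] have no edge at the isolated region, so they act
   trivially; letters in [al i :&: B] move inside the coset. *)
Lemma chain_piw_isolated i c B u d : 1 <= i <= m -> subgen iota (al i) c ->
  isolated_region i c (al i :&: B) -> all (fun e => e \in B) u ->
  subgen iota (al i :&: B) d ->
  cpiw u (c * d, i) (c * (d * wval iota [seq e <- u | e \in al i]), i).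
Proof.
move=> i_m c_al iso; elim: u d => [|e u IHu] d /= B_eu d_D.
  by rewrite mulg1; exact: rst_refl.
case/andP: B_eu => B_e B_u; case al_e: (e \in al i) => /=.
- exists (c * (d * iota e), i); split.
    rewrite mulgA; apply: chain_pi_inside => //.
    by apply: subgenM c_al (subgenS (subsetIl _ _) d_D).
  rewrite [d * (_ * _)]mulgA; apply: IHu B_u _; apply: subgenM d_D (subgen_gen _ _).
  by rewrite inE al_e.
- exists (c * d, i); split; last exact: IHu.
  by apply: chain_pi_isolated iso _ _; [split=> //; exists d | rewrite al_e].
Qed.

Lemma piw_identity_isolated w i c D u v : piw_identity iota m al gs w ->
  is_vertex iota m al u -> isolated_region i c D -> in_region i c D u ->
  cpiw w u v -> in_region i c D v.
Proof.
by move=> id_w u_vx iso u_reg /(id_w _ _ u_vx) uv; apply: (chain_eq_isolated iso uv).1.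
Qed.

Lemma isolated_single i c D : m <= 1 -> isolated_region i c D.
Proof.
move=> m_le1 u v _; split=> -[j [h [/andP[j_gt0 j_m] _ _ _]]];
  by move: (leq_ltn_trans j_gt0 j_m); rewrite ltnNge m_le1.
Qed.

Lemma isolated_first c D :
  ~ (exists x, in_coset iota c D x /\ in_coset iota (gs 1) (al 1 :&: al 2) x) ->
  isolated_region 1 c D.
Proof.
move=> disj u v [/= u_1 [d [D_d u_cd]]]; split.
- case=> j [h [_ h_al u_gh _]]; apply: disj; exists u.1.
  by split; [exists d | exists h; move: u_1; rewrite u_gh /= => <-].
- by case=> j [h [/andP[j_gt0 _] _ _ u_h]]; move: u_1 j_gt0; rewrite u_h => -[->].
Qed.

Lemma isolated_last c D :
  ~ (exists x, subgen iota (al m.-1 :&: al m) x /\ in_coset iota c D x) ->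
  isolated_region m c D.
Proof.
move=> disj u v [/= u_m [d [D_d u_cd]]]; split.
- by case=> j [h [/andP[_ j_m] _ u_gh _]]; move: j_m; rewrite -u_m u_gh ltnn.
- case=> j [h [_ h_al _ u_h]]; apply: disj; exists u.1.
  split; last by exists d.
  by move: u_m; rewrite u_h /= => <-.
Qed.

End Chains.

Definition step_elt (G : groupType) (g : nat -> G) (j : nat) : G := (g j)^-1 * g j.+1.

Lemma chain_piw_telescope (E : finType) (G : groupType) (iota : E -> G) (m : nat)
    (alpha : {set E}) (b : nat -> {set E}) (g : nat -> G) :
  (forall j, b j \subset alpha) ->
  (forall j, 1 <= j <= m -> subgen iota (b j) (step_elt g j)) ->
  forall j, 1 <= j <= m -> exists v, [/\ all (fun e => e \in alpha) v,
    wval iota v = (g 1%N)^-1 * g j.+1 &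
    chain_piw iota m b (step_elt g) v (1, 1%N) (step_elt g j, j)].
Proof.
move=> b_alpha b_step; elim=> [//|j IHj] /andP[_ j_m].
have [u [b_u u_val]] := b_step j.+1 j_m.
have walk := chain_piw_inside (step_elt g) (j_m : 0 < j.+1 <= m) (subgen1 iota _) b_u.
have alpha_u : all (fun e => e \in alpha) u.
  by apply: sub_all b_u => e /(subsetP (b_alpha _)).
rewrite mul1g -u_val in walk.
case: j IHj j_m u_val walk {b_u} => [|j] IHj j_m u_val walk.
  by exists u; rewrite -u_val.
have [v [alpha_v v_val v_walk]] := IHj (ltnW j_m).
exists (v ++ u); split.
- by rewrite all_cat alpha_v.
- by rewrite wval_cat v_val -u_val /step_elt mulgA mulgK.
- apply: (chain_piw_cat v_walk); apply: chain_piw_eql walk; apply: rst_step.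
  by exists j.+1, 1; rewrite mulg1; split=> //; apply: subgen1.
Qed.

(* [inord] sends every out-of-range index, in particular [k.+1], to [0], so
   [natf f] reads [f] cyclically on [0, ..., k.+1]. *)
Definition natf (T : Type) (k : nat) (f : 'I_k.+1 -> T) (j : nat) : T := f (inord j).

Lemma ordS_inord k j : j <= k -> ordS (inord j : 'I_k.+1) = inord j.+1.
Proof.
move=> j_k; apply: val_inj; rewrite /= inordK ?ltnS //.
case: (ltngtP j k) j_k => [j_lt _|//|->]; first by rewrite modn_small ?inordK.
by rewrite modnn /inord /insubd insubF ?ltnn.
Qed.

Lemma ord_pred_inord k j : 0 < j <= k -> ord_pred (inord j : 'I_k.+1) = inord j.-1.
Proof. by case: j => //= j j_k; rewrite -ordS_inord ?ordSK // ltnW. Qed.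

Lemma natf_wrap T k (f : 'I_k.+1 -> T) : natf f k.+1 = natf f 0.
Proof.
by congr f; apply: val_inj; rewrite /= (inordK (ltn0Sn k)) /inord /insubd insubF ?ltnn.
Qed.

Section CosetCycles.
Variables (E : finType) (G : groupType) (iota : E -> G) (alpha : {set E}) (k : nat).
Variables (g : 'I_k.+1 -> G) (b : 'I_k.+1 -> {set E}).
Hypothesis cyc : coset_cycle iota alpha g b.

Lemma coset_cycle_proper i : b i \proper alpha.
Proof.
case: cyc => _ _ b_alpha step disj; rewrite properE b_alpha; apply/negP => alpha_b.
apply: (disj (ordS i)); rewrite ordSK; exists (g (ordS (ordS i))); split; last first.
  by exists 1; split; [apply: subgen1 | rewrite mulg1].
suff -> : b (ordS i) :&: b i = b (ordS i) by apply: step.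
by apply/setIidPl; apply: subset_trans (b_alpha _) alpha_b.
Qed.

Lemma coset_cycle_word j u :
  all (fun e => e \in natf b j) u -> all (fun e => e \in alpha) u.
Proof.
by apply: sub_all => e /(subsetP (proper_sub (coset_cycle_proper (inord j)))).
Qed.

Lemma coset_cycle_step j : j <= k -> subgen iota (natf b j) (step_elt (natf g) j).
Proof.
case: cyc => _ _ _ step _ j_k; have [h [b_h g_h]] := step (inord j).
by rewrite /step_elt /natf -ordS_inord // g_h mulKg.
Qed.

Lemma coset_cycle_disjoint j : 0 < j <= k -> ~ exists x,
  subgen iota (natf b j.-1 :&: natf b j) x /\
  in_coset iota (step_elt (natf g) j) (natf b j :&: natf b j.+1) x.
Proof.
case: cyc => _ _ _ _ disj j_k [x [x_b [h [h_b x_h]]]]; apply: (disj (inord j)).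
rewrite ord_pred_inord // ordS_inord ?(leq_trans (leq_pred _)) //; last by case/andP: j_k.
exists (g (inord j) * x); split; first by exists x; rewrite setIC.
by exists h; rewrite x_h /step_elt /natf !mulgA mulgV mul1g.
Qed.

End CosetCycles.

Definition chain_compatible (E : finType) (G : groupType) (iota : E -> G)
    (alpha : {set E}) (n : nat) : Prop :=
  forall (m : nat) (al : nat -> {set E}) (gs : nat -> G),
    1 <= m <= n -> is_fac iota m al gs alpha ->
    forall w : seq E, all (fun e => e \in alpha) w -> wval iota w = 1 ->
    piw_identity iota m al gs w.

Section Acyclicity.
Variables (E : finType) (G : groupType) (iota : E -> G) (alpha : {set E}) (n : nat).
Hypothesis compat : chain_compatible iota alpha n.

Lemma coset_cycle_fac M (g : 'I_M.+2 -> G) (b : 'I_M.+2 -> {set E}) :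
  1 <= M -> coset_cycle iota alpha g b ->
  is_fac iota M (natf b) (step_elt (natf g)) alpha.
Proof.
move=> M_gt0 cyc; split=> // [i _ | i /andP[_ i_M] | i /andP[i_gt1 i_M]].
- exact: coset_cycle_proper cyc _.
- by apply: (coset_cycle_step cyc); rewrite ltnW // ltnW.
- by apply: (coset_cycle_disjoint cyc); rewrite ltnW //= ltnW // ltnW.
Qed.

Lemma no_coset_cycle2 (g : 'I_2 -> G) (b : 'I_2 -> {set E}) :
  1 <= n -> ~ coset_cycle iota alpha g b.
Proof.
move=> n_gt0 cyc; have one : 0 < 1 <= 1 by [].
have [u1 [b_u1 u1_val]] := coset_cycle_step cyc (leqnn 1).
have [u0 [b_u0 u0_val]] := coset_cycle_step cyc (leq0n 1).
rewrite -(natf_wrap b) in b_u0.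
pose al (_ : nat) := natf b 1; pose gs (_ : nat) : G := 1.
have iso c D : isolated_region iota 1 al gs 1 c D by apply: isolated_single.
have walk1 := chain_piw_inside gs one (subgen1 iota (al 1%N)) b_u1.
have walk0 := chain_piw_isolated (al:=al) (gs:=gs) one
  (coset_cycle_step cyc (leqnn 1)) (iso _ _) b_u0 (subgen1 iota _).
rewrite mul1g -u1_val in walk1; rewrite mulg1 mul1g in walk0.
have fac : is_fac iota 1 al gs alpha.
  by split=> // [i _|[|[]]|[|[]]] //; apply: coset_cycle_proper cyc _.
have u_alpha : all (fun e => e \in alpha) (u1 ++ u0).
  by rewrite all_cat (coset_cycle_word cyc b_u1) (coset_cycle_word cyc b_u0).
have u_val : wval iota (u1 ++ u0) = 1.
  by rewrite wval_cat -u1_val -u0_val /step_elt natf_wrap mulgA mulgK mulVg.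
have vertex : is_vertex iota 1 al (1, 1%N) by split=> //; apply: subgen1.
have start : in_region iota 1 1 (natf b 0 :&: natf b 1) (1, 1%N).
  by split=> //; apply/in_coset1/subgen1.
have [_ /in_coset1 x_b] := piw_identity_isolated
  (compat (n_gt0 : 0 < 1 <= n) fac u_alpha u_val) vertex (iso _ _) start
  (chain_piw_cat walk1 walk0).
apply: (coset_cycle_disjoint cyc one); eexists; split; first exact: x_b.
by eexists; split; first apply: subgen_filter b_u0.
Qed.

Hypothesis iota_invol : forall e, iota e * iota e = 1.

Lemma no_long_coset_cycle M (g : 'I_M.+2 -> G) (b : 'I_M.+2 -> {set E}) :
  1 <= M <= n -> ~ coset_cycle iota alpha g b.
Proof.
move=> M_range cyc; have /andP[M_gt0 _] := M_range; pose gs := step_elt (natf g).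
have first_M : 0 < 1 <= M by rewrite leqnn M_gt0.
have last_M : 0 < M <= M by rewrite leqnn M_gt0.
have b_alpha j : natf b j \subset alpha by apply/proper_sub/(coset_cycle_proper cyc).
have [v [alpha_v v_val v_walk]] := chain_piw_telescope b_alpha
  (fun j j_M => coset_cycle_step cyc (leq_trans (proj2 (andP j_M)) (leqnSn M))) last_M.
have [u0 [b_u0 u0_val]] := coset_cycle_step cyc (leq0n M.+1).
have [ul [b_ul ul_val]] := coset_cycle_step cyc (leqnn M.+1).
set D := natf b 1 :&: natf b 0.
have iso_first : isolated_region iota M (natf b) gs 1 1 D.
  apply: (isolated_first M) => -[x [/in_coset1 x_D x_gs]].
  by apply: (coset_cycle_disjoint cyc (erefl : 0 < 1 <= M.+1)); exists x; rewrite setIC.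
have iso_last : isolated_region iota M (natf b) gs M (gs M) (natf b M :&: natf b M.+1).
  by apply: (isolated_last gs); apply: (coset_cycle_disjoint cyc); rewrite M_gt0 leqnSn.
(* Starting at [z0^-1] makes the first segment end at [(1, 1)], where the
   traversal of the chain begins. *)
set z0 := wval iota [seq e <- u0 | e \in natf b 1].
have z0_D : subgen iota D z0^-1 by apply/subgenV/subgen_filter.
have walk0 := chain_piw_isolated first_M (subgen1 iota _) iso_first b_u0 z0_D.
have walk2 := chain_piw_isolated last_M (coset_cycle_step cyc (leqnSn M)) iso_last
  b_ul (subgen1 iota _).
rewrite mulVg !mul1g in walk0; rewrite mulg1 mul1g in walk2.
have u_alpha : all (fun e => e \in alpha) (u0 ++ v ++ ul).
  by rewrite !all_cat (coset_cycle_word cyc b_u0) alpha_v (coset_cycle_word cyc b_ul).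
have u_val : wval iota (u0 ++ v ++ ul) = 1.
  by rewrite !wval_cat -u0_val v_val -ul_val /step_elt natf_wrap !mulgA !mulgK mulVg.
have vertex : is_vertex iota M (natf b) (z0^-1, 1%N).
  by split=> //; apply: subgenS (subsetIl _ _) z0_D.
have start : in_region iota 1 1 D (z0^-1, 1%N) by split=> //; apply/in_coset1.
have [/= M1 /in_coset1 x_D] := piw_identity_isolated
  (compat M_range (coset_cycle_fac M_gt0 cyc) u_alpha u_val)
  vertex iso_first start (chain_piw_cat walk0 (chain_piw_cat v_walk walk2)).
subst M; apply: (coset_cycle_disjoint cyc (erefl : 0 < 1 <= 2)).
exists (gs 1%N * wval iota [seq e <- ul | e \in natf b 1]); split.
  by rewrite setIC.
by eexists; split; first exact: subgen_filter b_ul.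
Qed.

End Acyclicity.

Theorem mainTheorem8 (E : finType) (G : groupType) (iota : E -> G)
    (HG : is_E_group iota) (alpha : {set E}) (n : nat) (Hn : 1 <= n)
    (Hcompat : forall (m : nat) (al : nat -> {set E}) (gs : nat -> G),
        1 <= m <= n -> is_fac iota m al gs alpha ->
        forall w : seq E, all (fun e => e \in alpha) w -> wval iota w = 1 ->
        piw_identity iota m al gs w) :
  N_acyclic iota alpha (n + 2).
Proof.
have [_ _ iota_invol _] := HG.
have compat : chain_compatible iota alpha n := Hcompat.
move=> [|[|[|M]]] // /andP[_ k_le] g b; first exact: (no_coset_cycle2 compat Hn).
by apply: (no_long_coset_cycle compat iota_invol); rewrite addn2 !ltnS in k_le.
Qed.
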